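(* Let $(R,\mathfrak{m})$ be a finite commutative local ring with identity and let $I$ be an ideal of $R$ with $I\subseteq\mathfrak m$ such that $\mathfrak{m}/I$ is not a principal ideal of $R/I$. If some minimal generating set of $\mathfrak{m}/I$ contains distinct elements $x+I$ and $y+I$ with $|U(R)x|\geq 3$ and $|U(R)y|\geq 3$, then $\Gamma''_I(R)$ is not planar.
   Context: $U(R)$ is the group of units of $R$ and $U(R)x=\{ux: u\in U(R)\}$. For an ideal $I$ of $R$, $\Gamma''_I(R)$ is the simple undirected graph whose vertex set is $\{x\in R\setminus I : xR+I\neq R\}$, with distinct vertices $x,y$ adjacent if and only if $x\notin yR+I$ and $y\notin xR+I$. A graph is planar if it can be drawn in the plane with edges meeting only at their endpoints. *)

From HB Require Import structures.
From mathcomp Require Import all_boot all_order all_algebra.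
From mathcomp Require Import all_classical all_reals all_analysis.
Set Implicit Arguments. Unset Strict Implicit. Unset Printing Implicit Defensive.
Import Order.TTheory GRing.Theory Num.Theory.
Import numFieldNormedType.Exports.
Local Open Scope classical_set_scope.
Local Open Scope ring_scope.

Section RingDefs.
Variable A : finComUnitRingType.

Definition is_ideal (J : {set A}) : Prop :=
  0 \in J /\ (forall a b, a \in J -> b \in J -> a + b \in J) /\
  (forall r a, a \in J -> r * a \in J).

Definition is_maximal_ideal (J : {set A}) : Prop :=
  is_ideal J /\ 1 \notin J /\
  (forall K : {set A}, is_ideal K -> J \subset K -> K = J \/ K = [set: A]%SET).

Definition local_max_ideal (m : {set A}) : Prop :=
  is_maximal_ideal m /\ (forall K, is_maximal_ideal K -> K = m).

Definition princ_plus (I : {set A}) (a : A) : {set A} :=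
  [set z | [exists r : A, [exists i in I, z == a * r + i]]].

(* the ideal of A generated by S and I, i.e. the preimage in A of the
   ideal of A/I generated by {s + I : s in S} *)
Definition gen_plus (I S : {set A}) : {set A} :=
  [set z | [exists c : {ffun A -> A}, z - \sum_(s in S) c s * s \in I]].

(* m/I is a principal ideal of A/I *)
Definition principal_mod (I m : {set A}) : Prop :=
  exists a : A, m = princ_plus I a.

(* S is a set of representatives (pairwise distinct mod I) of a minimal
   generating set {s + I : s in S} of the ideal m/I of A/I *)
Definition min_gen_set_mod (I m S : {set A}) : Prop :=
  S \subset m /\
  {in S &, forall s t, s - t \in I -> s = t} /\
  gen_plus I S = m /\
  (forall S' : {set A}, S' \proper S -> gen_plus I S' != m).

Definition unit_orbit (x : A) : {set A} :=
  [set u * x | u in [set v : A | v \is a GRing.unit]].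

Definition gvert (I : {set A}) : {set A} :=
  [set x | (x \notin I) && (princ_plus I x != [set: A]%SET)].

Definition gadj (I : {set A}) : rel A :=
  fun x y => [&& x != y, x \notin princ_plus I y & y \notin princ_plus I x].

End RingDefs.

Definition planar (R : realType) (T : finType) (V : {set T}) (adj : rel T) : Prop :=
  exists (p : T -> (R * R)%type) (arc : T -> T -> R -> (R * R)%type),
    {in V &, injective p} /\
    (forall u v, u \in V -> v \in V -> adj u v ->
       {within [set t : R | 0 <= t <= 1]%classic, continuous (arc u v)} /\
       (forall s t : R, 0 <= s <= 1 -> 0 <= t <= 1 -> arc u v s = arc u v t -> s = t) /\
       arc u v 0 = p u /\ arc u v 1 = p v) /\
    (forall u v w (t : R), u \in V -> v \in V -> w \in V -> adj u v ->
       0 < t < 1 -> arc u v t <> p w) /\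
    (forall u v u' v' (s t : R), u \in V -> v \in V -> u' \in V -> v' \in V ->
       adj u v -> adj u' v' -> ~ ((u = u' /\ v = v') \/ (u = v' /\ v = u')) ->
       0 < s < 1 -> 0 < t < 1 -> arc u v s <> arc u' v' t).

(* Elements x and y of a minimal generating set of m/I satisfy x \notin yR + I and
   y \notin xR + I, and both properties are invariant under multiplication by units:
   every vertex of U(R)x is adjacent to every vertex of U(R)y, so Gamma''_I(R)
   contains K_{3,3}.
   K_{3,3} is not planar.  In a drawing, two edges e and f without common endpoint
   give a map (s, t) |-> e(s) - f(t) from the unit square to the punctured plane, so
   the winding number of its boundary vanishes.  Counting windings in quarter turns
   along a fine grid, this yields for each pair of disjoint edges an integer
   relation between the windings of the edges around the vertices, while modulo 4
   each winding is determined by the quadrants of the directions between vertices;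
   the eighteen relations are incompatible. *)

From HB Require Import structures.
From mathcomp Require Import all_boot all_order all_algebra.
From mathcomp Require Import all_classical all_reals all_analysis.
From mathcomp Require Import zify ring lra.
Set Implicit Arguments. Unset Strict Implicit. Unset Printing Implicit Defensive.
Import Order.TTheory GRing.Theory Num.Theory.
Import numFieldNormedType.Exports.
Local Open Scope ring_scope.

(* Quadrants are numbered 0 to 3 counterclockwise; [qturn a b] is the signed number
   of quarter turns from quadrant [a] to quadrant [b], a half turn counting as 2. *)
Definition qturn (a b : nat) : int :=
  let d := ((b + 4 - a) %% 4)%N in if d == 3%N then -1 else d%:Z.

Lemma qturn_mod4 a b : (a < 4)%N -> (b < 4)%N ->
  exists k : int, qturn a b = b%:Z - a%:Z + 4 * k.
Proof.
move: a b; do 5?[case=> //]; do 5?[case=> //] => _ _;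
  by [exists 0 | exists 1 | exists (-1)].
Qed.

Lemma qturn_add a b c : (a < 4)%N -> (b < 4)%N -> (c < 4)%N ->
  qturn a b != 2 -> qturn b c != 2 -> qturn a c != 2 ->
  qturn a b + qturn b c = qturn a c.
Proof. by move: a b c; do 5?[case=> //]; do 5?[case=> //]; do 5?[case=> //]. Qed.

Lemma qturn_add2 a b : (a < 4)%N -> (b < 4)%N ->
  qturn ((a + 2) %% 4) ((b + 2) %% 4) = qturn a b.
Proof. by move: a b; do 5?[case=> //]; do 5?[case=> //]. Qed.

Section Quadrants.
Variable R : realFieldType.
Implicit Types v w : (R * R)%type.

Definition quadrant v : nat :=
  if (0 < v.1) && (0 <= v.2) then 0%N
  else if (v.1 <= 0) && (0 < v.2) then 1%N
  else if (v.1 < 0) && (v.2 <= 0) then 2%N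
  else 3%N.

Variant quadrant_spec v : nat -> Prop :=
  | Quadrant0 of 0 < v.1 & 0 <= v.2 : quadrant_spec v 0%N
  | Quadrant1 of v.1 <= 0 & 0 < v.2 : quadrant_spec v 1%N
  | Quadrant2 of v.1 < 0 & v.2 <= 0 : quadrant_spec v 2%N
  | Quadrant3 of 0 <= v.1 & v.2 < 0 : quadrant_spec v 3%N
  | QuadrantOrigin of v = 0 : quadrant_spec v 3%N.

Lemma quadrantP v : quadrant_spec v (quadrant v).
Proof.
rewrite /quadrant; case: ifP => [/andP[] | h0]; first exact: Quadrant0.
case: ifP => [/andP[] | h1]; first exact: Quadrant1.
case: ifP => [/andP[] | h2]; first exact: Quadrant2.
case: v h0 h1 h2 => a b /=.
case: (ltrgtP a 0) => ha; case: (ltrgtP b 0) => hb //= _ _ _.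
- by apply: Quadrant3; rewrite // ltW.
- by apply: Quadrant3; rewrite // ha.
- by apply: QuadrantOrigin; rewrite ha hb.
Qed.

Lemma quadrant_lt4 v : (quadrant v < 4)%N.
Proof. by case: quadrantP. Qed.

Lemma quadrantN v : v != 0 -> quadrant (- v) = ((quadrant v + 2) %% 4)%N.
Proof.
move=> v0; have vN0 : - v != 0 by rewrite oppr_eq0.
case: quadrantP vN0 => [||||-> /eqP//]; case: quadrantP v0 => [||||-> /eqP//];
  case: v => a b /= * //; exfalso; lra.
Qed.

Definition turn v w : int := qturn (quadrant v) (quadrant w).

Lemma turn_add u v w : turn u v != 2 -> turn v w != 2 -> turn u w != 2 ->
  turn u v + turn v w = turn u w.
Proof. exact: qturn_add (quadrant_lt4 u) (quadrant_lt4 v) (quadrant_lt4 w). Qed.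

Lemma turnNN v w : v != 0 -> w != 0 -> turn (- v) (- w) = turn v w.
Proof.
by move=> v0 w0; rewrite /turn !quadrantN // qturn_add2 ?quadrant_lt4.
Qed.

Lemma turn_opposite v w : turn v w = 2 -> v.1 * w.1 <= 0 /\ v.2 * w.2 <= 0.
Proof.
rewrite /turn; case: quadrantP => [||||->]; case: quadrantP => [||||->] //= *;
  split; nra.
Qed.

Lemma norm_le_dist_of_mul_le0 (x y : R) : x * y <= 0 -> `|x| <= `|y - x|.
Proof.
move=> xy; rewrite -(@ler_pXn2r _ 2) ?nnegrE // -!normrX !ger0_norm ?sqr_ge0 //; nra.
Qed.

Definition qclose v w := `|w.1 - v.1| + `|w.2 - v.2| < `|v.1| + `|v.2|.

Lemma turn_qclose v w : qclose v w -> turn v w != 2.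
Proof.
rewrite /qclose => vw; apply/eqP => /turn_opposite[h1 h2].
have := norm_le_dist_of_mul_le0 h1; have := norm_le_dist_of_mul_le0 h2; lra.
Qed.

Lemma qclose_of_near (v a b : R * R) (eps : R) : 8 * eps <= `|v.1| + `|v.2| ->
  `|a.1 - v.1| < eps -> `|a.2 - v.2| < eps -> `|b.1 - v.1| < eps -> `|b.2 - v.2| < eps ->
  qclose a b.
Proof.
rewrite /qclose => ve a1 a2 b1 b2.
have := ler_distD v.1 b.1 a.1; have := ler_distD v.2 b.2 a.2.
have := ler_distD a.1 v.1 0; have := ler_distD a.2 v.2 0; have := normr_ge0 (a.1 - v.1).
rewrite !subr0 (distrC v.1 a.1) (distrC v.2 a.2); lra.
Qed.

Lemma l1_norm_gt0 v : v != 0 -> 0 < `|v.1| + `|v.2|.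
Proof.
case: v => a b v0; rewrite lt_neqAle addr_ge0 // andbT eq_sym paddr_eq0 // !normr_eq0.
by apply: contra v0 => /andP[/eqP/= -> /eqP/= ->].
Qed.

End Quadrants.

Section Winding.
Variable R : realFieldType.
Implicit Types (u : nat -> (R * R)%type) (G : nat -> nat -> (R * R)%type).

Definition qwind u N : int := \sum_(k < N) turn (u k) (u k.+1).

Lemma eq_qwind u u' N : u =1 u' -> qwind u N = qwind u' N.
Proof. by move=> uu'; apply: eq_bigr => k _; rewrite !uu'. Qed.

Lemma qwind_mod4 u N : exists m : int,
  qwind u N = (quadrant (u N))%:Z - (quadrant (u 0%N))%:Z + 4 * m.
Proof.
elim: N => [|N [m IH]]; first by exists 0; rewrite /qwind big_ord0; lia.
have [k Hk] := qturn_mod4 (quadrant_lt4 (u N)) (quadrant_lt4 (u N.+1)).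
by exists (m + k); rewrite /qwind big_ord_recr /= -/(qwind u N) IH /turn Hk; lia.
Qed.

Lemma qwindN u N : (forall k, (k <= N)%N -> u k != 0) ->
  qwind (fun k => - u k) N = qwind u N.
Proof. by move=> u0; apply: eq_bigr => k _; rewrite turnNN ?u0 // ltnW. Qed.

Definition grid_boundary G N : int :=
  qwind (G ^~ 0%N) N + qwind (G N) N - qwind (G ^~ N) N - qwind (G 0%N) N.

Definition cell_turn G i j : int :=
  turn (G i j) (G i.+1 j) + turn (G i.+1 j) (G i.+1 j.+1)
  - turn (G i j.+1) (G i.+1 j.+1) - turn (G i j) (G i j.+1).

Lemma grid_boundary_cells G N :
  grid_boundary G N = \sum_(i < N) \sum_(j < N) cell_turn G i j.
Proof.
pose h i j := turn (G i j) (G i.+1 j); pose v i j := turn (G i j) (G i j.+1).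
have tele (f : nat -> int) : \sum_(k < N) (f k.+1 - f k) = f N - f 0%N.
  by rewrite -(big_mkord xpredT (fun k => f k.+1 - f k)) telescope_sumr.
transitivity (\sum_(j < N) (v N j - v 0%N j) - \sum_(i < N) (h i N - h i 0%N)).
  by rewrite !sumrB /grid_boundary /qwind; ring.
have -> : \sum_(j < N) (v N j - v 0%N j) = \sum_(j < N) \sum_(i < N) (v i.+1 j - v i j).
  by apply: eq_bigr => j _; rewrite (tele (v ^~ j)).
have -> : \sum_(i < N) (h i N - h i 0%N) = \sum_(i < N) \sum_(j < N) (h i j.+1 - h i j).
  by apply: eq_bigr => i _; rewrite (tele (h i)).
rewrite exchange_big -sumrB; apply: eq_bigr => i _; rewrite -sumrB.
by apply: eq_bigr => j _; rewrite /cell_turn /h /v; ring.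
Qed.

Lemma grid_boundary_eq0 G N :
    (forall i j i' j', (i <= i' <= i.+1)%N -> (j <= j' <= j.+1)%N ->
       (i' <= N)%N -> (j' <= N)%N -> turn (G i j) (G i' j') != 2) ->
  grid_boundary G N = 0.
Proof.
move=> fine; rewrite grid_boundary_cells; apply: big1 => i _; apply: big1 => j _.
have iN := ltn_ord i; have jN := ltn_ord j.
have corners i' j' i'' j'' :
    [&& i <= i', i' <= i'' & i'' <= i.+1]%N -> [&& j <= j', j' <= j'' & j'' <= j.+1]%N ->
    turn (G i' j') (G i'' j'') != 2.
  by move=> hi hj; apply: fine; lia.
have lower : turn (G i j) (G i.+1 j) + turn (G i.+1 j) (G i.+1 j.+1) =
             turn (G i j) (G i.+1 j.+1) by apply: turn_add; apply: corners; lia.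
have upper : turn (G i j) (G i j.+1) + turn (G i j.+1) (G i.+1 j.+1) =
             turn (G i j) (G i.+1 j.+1) by apply: turn_add; apply: corners; lia.
by rewrite /cell_turn; lia.
Qed.

End Winding.

Section GridPoints.
Variable R : numFieldType.

Definition gridpt (N k : nat) : R := k%:R / N%:R.

Lemma gridpt0 N : gridpt N 0 = 0.
Proof. by rewrite /gridpt mul0r. Qed.

Lemma gridptN N : (0 < N)%N -> gridpt N N = 1.
Proof. by move=> N0; rewrite /gridpt divff // pnatr_eq0 -lt0n. Qed.

Lemma gridpt_itv N k : (0 < N)%N -> (k <= N)%N -> 0 <= gridpt N k <= 1.
Proof.
move=> N0 kN; rewrite /gridpt divr_ge0 ?ler0n //= ler_pdivrMr ?ltr0n // mul1r.
by rewrite ler_nat.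
Qed.

Lemma gridptS N k : (0 < N)%N -> gridpt N k.+1 - gridpt N k = N%:R^-1.
Proof. by move=> N0; rewrite /gridpt -mulrBl -natrB // subSnn mul1r. Qed.

Lemma gridpt_dist N i i' : (0 < N)%N -> (i <= i' <= i.+1)%N ->
  `|gridpt N i - gridpt N i' : R| <= N%:R^-1.
Proof.
move=> N0 hi; have [->|->] : i' = i \/ i' = i.+1 by lia.
  by rewrite subrr normr0 invr_ge0 ler0n.
by rewrite distrC gridptS // ger0_norm // invr_ge0 ler0n.
Qed.

End GridPoints.

Arguments gridpt {R}.

(* Read [wa i j k] and [wb i j l] as the quarter-turn windings of the edge a_i b_j
   of a drawing of K_{3,3} around the vertices a_k and b_l, and [qaa], [qbb],
   [qab], [qba] as the quadrants of the directions between the vertices. *)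
Lemma no_K33_quarter_windings (wa wb : nat -> nat -> nat -> int)
    (qaa qbb qab qba : nat -> nat -> nat) :
  (forall i j k l, (i < 3)%N -> (j < 3)%N -> (k < 3)%N -> (l < 3)%N -> i != k -> j != l ->
     wa i j k + wb k l j - wb i j l - wa k l i = 0) ->
  (forall i j k, (i < 3)%N -> (j < 3)%N -> (k < 3)%N -> i != k ->
     exists m : int, wa i j k = (qba j k)%:Z - (qaa i k)%:Z + 4 * m) ->
  (forall i j l, (i < 3)%N -> (j < 3)%N -> (l < 3)%N -> j != l ->
     exists m : int, wb i j l = (qbb j l)%:Z - (qab i l)%:Z + 4 * m) ->
  (forall i k, (i < 3)%N -> (k < 3)%N -> i != k -> qaa k i = ((qaa i k + 2) %% 4)%N) ->
  (forall j l, (j < 3)%N -> (l < 3)%N -> j != l -> qbb l j = ((qbb j l + 2) %% 4)%N) ->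
  (forall i j, (i < 3)%N -> (j < 3)%N -> qba j i = ((qab i j + 2) %% 4)%N) ->
  False.
Proof.
move=> cross wa_mod wb_mod qaaN qbbN qabN.
have := cross 0 0 1 1 isT isT isT isT isT isT. have := cross 0 0 1 2 isT isT isT isT isT isT.
have := cross 0 1 1 0 isT isT isT isT isT isT. have := cross 0 1 1 2 isT isT isT isT isT isT.
have := cross 0 2 1 0 isT isT isT isT isT isT. have := cross 0 2 1 1 isT isT isT isT isT isT.
have := cross 0 0 2 1 isT isT isT isT isT isT. have := cross 0 0 2 2 isT isT isT isT isT isT.
have := cross 0 1 2 0 isT isT isT isT isT isT. have := cross 0 1 2 2 isT isT isT isT isT isT.
have := cross 0 2 2 0 isT isT isT isT isT isT. have := cross 0 2 2 1 isT isT isT isT isT isT.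
have := cross 1 0 2 1 isT isT isT isT isT isT. have := cross 1 0 2 2 isT isT isT isT isT isT.
have := cross 1 1 2 0 isT isT isT isT isT isT. have := cross 1 1 2 2 isT isT isT isT isT isT.
have := cross 1 2 2 0 isT isT isT isT isT isT. have := cross 1 2 2 1 isT isT isT isT isT isT.
have [? ?] := wa_mod 0 0 1 isT isT isT isT. have [? ?] := wa_mod 0 0 2 isT isT isT isT.
have [? ?] := wb_mod 0 0 1 isT isT isT isT. have [? ?] := wb_mod 0 0 2 isT isT isT isT.
have [? ?] := wa_mod 0 1 1 isT isT isT isT. have [? ?] := wa_mod 0 1 2 isT isT isT isT.
have [? ?] := wb_mod 0 1 0 isT isT isT isT. have [? ?] := wb_mod 0 1 2 isT isT isT isT.
have [? ?] := wa_mod 0 2 1 isT isT isT isT. have [? ?] := wa_mod 0 2 2 isT isT isT isT.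
have [? ?] := wb_mod 0 2 0 isT isT isT isT. have [? ?] := wb_mod 0 2 1 isT isT isT isT.
have [? ?] := wa_mod 1 0 0 isT isT isT isT. have [? ?] := wa_mod 1 0 2 isT isT isT isT.
have [? ?] := wb_mod 1 0 1 isT isT isT isT. have [? ?] := wb_mod 1 0 2 isT isT isT isT.
have [? ?] := wa_mod 1 1 0 isT isT isT isT. have [? ?] := wa_mod 1 1 2 isT isT isT isT.
have [? ?] := wb_mod 1 1 0 isT isT isT isT. have [? ?] := wb_mod 1 1 2 isT isT isT isT.
have [? ?] := wa_mod 1 2 0 isT isT isT isT. have [? ?] := wa_mod 1 2 2 isT isT isT isT.
have [? ?] := wb_mod 1 2 0 isT isT isT isT. have [? ?] := wb_mod 1 2 1 isT isT isT isT.
have [? ?] := wa_mod 2 0 0 isT isT isT isT. have [? ?] := wa_mod 2 0 1 isT isT isT isT.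
have [? ?] := wb_mod 2 0 1 isT isT isT isT. have [? ?] := wb_mod 2 0 2 isT isT isT isT.
have [? ?] := wa_mod 2 1 0 isT isT isT isT. have [? ?] := wa_mod 2 1 1 isT isT isT isT.
have [? ?] := wb_mod 2 1 0 isT isT isT isT. have [? ?] := wb_mod 2 1 2 isT isT isT isT.
have [? ?] := wa_mod 2 2 0 isT isT isT isT. have [? ?] := wa_mod 2 2 1 isT isT isT isT.
have [? ?] := wb_mod 2 2 0 isT isT isT isT. have [? ?] := wb_mod 2 2 1 isT isT isT isT.
have := qaaN 0 1 isT isT isT. have := qbbN 0 1 isT isT isT. have := qaaN 0 2 isT isT isT.
have := qbbN 0 2 isT isT isT. have := qabN 0 0 isT isT. have := qabN 0 1 isT isT.
have := qabN 0 2 isT isT. have := qaaN 1 2 isT isT isT. have := qbbN 1 2 isT isT isT.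
have := qabN 1 0 isT isT. have := qabN 1 1 isT isT. have := qabN 1 2 isT isT.
have := qabN 2 0 isT isT. have := qabN 2 1 isT isT. have := qabN 2 2 isT isT.
lia.
Qed.

Section UnitSquare.
Local Open Scope classical_set_scope.
Variable R : realType.
Implicit Types (e f g : R -> (R * R)%type).

Lemma within01_continuous_near g (s0 eps : R) :
    {within [set t : R | 0 <= t <= 1], continuous g} -> 0 <= s0 <= 1 -> 0 < eps ->
  exists2 d, 0 < d & forall s, 0 <= s <= 1 -> `|s - s0| < d ->
    `|(g s).1 - (g s0).1| < eps /\ `|(g s).2 - (g s0).2| < eps.
Proof.
move=> /subspace_continuousP cg s01 eps0.
have : nbhs s0 (fun t => 0 <= t <= 1 -> `|g s0 - g t| < eps).
  exact: cvgr_dist_lt _ _ (cg s0 s01) _ eps0.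
move=> /nbhs_ballP[d /= d0 near_s0]; exists d => // s s01' ds.
have := near_s0 s; rewrite /ball /= distrC => /(_ ds s01').
rewrite prod_normE gt_max !(distrC (g s0).1) !(distrC (g s0).2) => /andP[h1 h2].
by split.
Qed.

Lemma square01_compact :
  compact [set p : R * R | 0 <= p.1 <= 1 /\ 0 <= p.2 <= 1].
Proof.
have -> : [set p : R * R | 0 <= p.1 <= 1 /\ 0 <= p.2 <= 1] = `[0, 1] `*` `[0, 1].
  by apply/seteqP; split => -[a b] /=; rewrite !in_itv.
by apply: compact_setX; apply: segment_compact.
Qed.

Lemma diff_qclose_local e f s0 t0 :
    {within [set t : R | 0 <= t <= 1], continuous e} ->
    {within [set t : R | 0 <= t <= 1], continuous f} ->
    0 <= s0 <= 1 -> 0 <= t0 <= 1 -> e s0 != f t0 ->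
  exists2 d, 0 < d & forall s t s' t', 0 <= s <= 1 -> 0 <= t <= 1 ->
    0 <= s' <= 1 -> 0 <= t' <= 1 -> `|s - s0| < d -> `|t - t0| < d ->
    `|s' - s0| < d -> `|t' - t0| < d -> qclose (e s - f t) (e s' - f t').
Proof.
move=> ce cf hs0 ht0 ef.
pose v := e s0 - f t0; pose eps := (`|v.1| + `|v.2|) / 16.
have eps0 : 0 < eps by rewrite divr_gt0 // l1_norm_gt0 // subr_eq0.
have [d1 d10 near_e] := within01_continuous_near ce hs0 eps0.
have [d2 d20 near_f] := within01_continuous_near cf ht0 eps0.
have diffB (a b c d : R) : `|(a - b) - (c - d)| <= `|a - c| + `|b - d|.
  by rewrite (_ : (a - b) - (c - d) = (a - c) - (b - d)); [exact: ler_normB | ring].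
have near_v s t : 0 <= s <= 1 -> 0 <= t <= 1 -> `|s - s0| < d1 -> `|t - t0| < d2 ->
    `|(e s - f t).1 - v.1| < 2 * eps /\ `|(e s - f t).2 - v.2| < 2 * eps.
  move=> hs ht sd td; have [e1 e2] := near_e s hs sd; have [f1 f2] := near_f t ht td.
  have := diffB (e s).1 (f t).1 (e s0).1 (f t0).1.
  have := diffB (e s).2 (f t).2 (e s0).2 (f t0).2.
  by rewrite /=; split; lra.
exists (Num.min d1 d2); first by rewrite lt_min d10 d20.
move=> s t s' t' hs ht hs' ht'; rewrite !lt_min.
move=> /andP[s1 _] /andP[_ t2] /andP[s'1 _] /andP[_ t'2].
have [Gv1 Gv2] := near_v s t hs ht s1 t2.
have [G'v1 G'v2] := near_v s' t' hs' ht' s'1 t'2.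
by apply: (@qclose_of_near _ v _ _ (2 * eps)) => //; rewrite /eps; lra.
Qed.

(* The Lebesgue number argument on the compact unit square. *)
Lemma diff_qclose_uniform e f :
    {within [set t : R | 0 <= t <= 1], continuous e} ->
    {within [set t : R | 0 <= t <= 1], continuous f} ->
    (forall s t, 0 <= s <= 1 -> 0 <= t <= 1 -> e s != f t) ->
  exists2 eta, 0 < eta & forall s t s' t', 0 <= s <= 1 -> 0 <= t <= 1 ->
    0 <= s' <= 1 -> 0 <= t' <= 1 -> `|s - s'| < eta -> `|t - t'| < eta ->
    qclose (e s - f t) (e s' - f t').
Proof.
move=> ce cf ef.
pose K := [set p : R * R | 0 <= p.1 <= 1 /\ 0 <= p.2 <= 1].
pose P eta p := K p -> forall q, K q -> `|p.1 - q.1| < eta -> `|p.2 - q.2| < eta ->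
  qclose (e p.1 - f p.2) (e q.1 - f q.2).
have cover : \forall eta \near 0^'+, K `<=` P eta.
  apply: (proj1 (compact_near_coveringP K) square01_compact) => -[s0 t0] [/= hs ht].
  have [d d0 close] := diff_qclose_local ce cf hs ht (ef _ _ hs ht).
  have d20 : 0 < d / 2 by rewrite divr_gt0.
  exists ([set p | `|p.1 - s0| < d / 2 /\ `|p.2 - t0| < d / 2],
          [set eta | 0 < eta < d / 2]) => /=.
    split; last by near=> eta; apply/andP; split; near: eta;
      [exact: nbhs_right_gt | exact: nbhs_right_lt].
    apply/nbhs_ballP; exists (d / 2) => // p [p1 p2]; rewrite /ball /= in p1 p2.
    by split; rewrite distrC.
  move=> [p eta] /= [[p1 p2] /andP[eta0 etad]] [Kp1 Kp2] q [Kq1 Kq2] pq1 pq2.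
  have := ler_distD p.1 q.1 s0; have := ler_distD p.2 q.2 t0.
  rewrite (distrC q.1 p.1) (distrC q.2 p.2) => qs qt.
  by apply: close => //; lra.
have [eta [Keta eta0]] : exists eta, K `<=` P eta /\ 0 < eta.
  apply: (@filter_ex _ _ (at_right_proper_filter 0)).
  by near=> eta; split; near: eta; [exact: cover | exact: nbhs_right_gt].
exists eta => // s t s' t' hs ht hs' ht'.
exact: (Keta (s, t) (conj hs ht) (conj hs ht) (s', t') (conj hs' ht')).
Unshelve. all: end_near.
Qed.

End UnitSquare.

Section SquareWinding.
Local Open Scope classical_set_scope.
Variable R : realType.
Implicit Types (e f : R -> (R * R)%type).

Definition qwind_square e f N : int :=
  grid_boundary (fun i j => e (gridpt N i) - f (gridpt N j)) N.

Lemma qwind_squareE e f N : (0 < N)%N ->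
    (forall t, 0 <= t <= 1 -> f t != e 0 /\ f t != e 1) ->
  qwind_square e f N =
    qwind (fun n => e (gridpt N n) - f 0) N + qwind (fun n => f (gridpt N n) - e 1) N
    - qwind (fun n => e (gridpt N n) - f 1) N - qwind (fun n => f (gridpt N n) - e 0) N.
Proof.
move=> N0 fe; have f_itv n : (n <= N)%N -> 0 <= (gridpt N n : R) <= 1 by apply: gridpt_itv.
rewrite /qwind_square /grid_boundary gridpt0 gridptN //.
rewrite -[qwind (fun n => f _ - e 1) N]qwindN; last first.
  by move=> n nN; rewrite subr_eq0; case: (fe _ (f_itv n nN)).
rewrite -[qwind (fun n => f _ - e 0) N]qwindN; last first.
  by move=> n nN; rewrite subr_eq0; case: (fe _ (f_itv n nN)).
by congr (_ + _ - _ - _); apply: eq_qwind => n; rewrite opprB.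
Qed.

Lemma qwind_square_eq0 e f :
    {within [set t : R | 0 <= t <= 1], continuous e} ->
    {within [set t : R | 0 <= t <= 1], continuous f} ->
    (forall s t, 0 <= s <= 1 -> 0 <= t <= 1 -> e s != f t) ->
  \forall N \near \oo, qwind_square e f N = 0.
Proof.
move=> ce cf ef; have [eta eta0 close] := diff_qclose_uniform ce cf ef.
near=> N.
have Neta : eta^-1 < N%:R by near: N; exact: nbhs_infty_gtr.
have N0 : (0 < N)%N by rewrite -(ltr0n R); apply: lt_trans Neta; rewrite invr_gt0.
have Ninv : N%:R^-1 < eta by rewrite -[eta]invrK ltf_pV2 ?posrE ?invr_gt0 ?ltr0n.
apply: grid_boundary_eq0 => i j i' j' hi hj i'N j'N; apply: turn_qclose.
apply: close; rewrite ?gridpt_itv //; try lia.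
- exact: le_lt_trans (gridpt_dist _ N0 hi) Ninv.
- exact: le_lt_trans (gridpt_dist _ N0 hj) Ninv.
Unshelve. all: end_near.
Qed.

End SquareWinding.

Lemma itv01_cases (R : realDomainType) (t : R) :
  0 <= t <= 1 -> [\/ t = 0, t = 1 | 0 < t < 1].
Proof.
case/andP=> t0 t1; have [->|tn0] := eqVneq t 0; first exact: Or31.
have [->|tn1] := eqVneq t 1; first exact: Or32.
by apply: Or33; rewrite !lt_neqAle eq_sym tn0 tn1 t0 t1.
Qed.

Section Drawing.
Local Open Scope classical_set_scope.
Variables (R : realType) (T : finType) (V : {set T}) (adj : rel T).
Variables (p : T -> (R * R)%type) (arc : T -> T -> R -> (R * R)%type).
Hypothesis p_inj : {in V &, injective p}.
Hypothesis arc_cont : forall u v, u \in V -> v \in V -> adj u v ->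
  {within [set t : R | 0 <= t <= 1], continuous (arc u v)}.
Hypothesis arc0 : forall u v, u \in V -> v \in V -> adj u v -> arc u v 0 = p u.
Hypothesis arc1 : forall u v, u \in V -> v \in V -> adj u v -> arc u v 1 = p v.
Hypothesis arc_avoid : forall u v w (t : R), u \in V -> v \in V -> w \in V ->
  adj u v -> 0 < t < 1 -> arc u v t <> p w.
Hypothesis arc_cross : forall u v u' v' (s t : R),
  u \in V -> v \in V -> u' \in V -> v' \in V -> adj u v -> adj u' v' ->
  ~ ((u = u' /\ v = v') \/ (u = v' /\ v = u')) ->
  0 < s < 1 -> 0 < t < 1 -> arc u v s <> arc u' v' t.

Lemma p_neq u w : u \in V -> w \in V -> u != w -> p u != p w.
Proof. by move=> uV wV; apply: contra => /eqP/p_inj ->. Qed.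

Lemma arc_avoids_vertex u v w t : u \in V -> v \in V -> w \in V -> adj u v ->
  u != w -> v != w -> 0 <= t <= 1 -> arc u v t != p w.
Proof.
move=> uV vV wV uv uw vw /itv01_cases[->|->|t_in]; rewrite ?arc0 ?arc1 ?p_neq //.
exact/eqP/arc_avoid.
Qed.

Lemma arcs_apart u v u' v' s t : u \in V -> v \in V -> u' \in V -> v' \in V ->
  adj u v -> adj u' v' -> [&& u != u', u != v', v != u' & v != v'] ->
  0 <= s <= 1 -> 0 <= t <= 1 -> arc u v s != arc u' v' t.
Proof.
move=> uV vV u'V v'V uv u'v' /and4P[uu' uv' vu' vv'] s01 t01.
case: (itv01_cases s01) => [->|->|s_in].
- by rewrite arc0 // eq_sym; apply: arc_avoids_vertex => //; rewrite eq_sym.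
- by rewrite arc1 // eq_sym; apply: arc_avoids_vertex => //; rewrite eq_sym.
case: (itv01_cases t01) => [->|->|t_in].
- by rewrite arc0 //; apply: arc_avoids_vertex.
- by rewrite arc1 //; apply: arc_avoids_vertex.
apply/eqP; apply: arc_cross => // -[[/eqP uu'' _]|[/eqP uv'' _]].
- by rewrite uu'' in uu'.
- by rewrite uv'' in uv'.
Qed.

Lemma arcs_qwind_square_eq0 u v u' v' : u \in V -> v \in V -> u' \in V -> v' \in V ->
  adj u v -> adj u' v' -> [&& u != u', u != v', v != u' & v != v'] ->
  \forall N \near \oo, qwind_square (arc u v) (arc u' v') N = 0.
Proof.
move=> uV vV u'V v'V uv u'v' disj.
apply: qwind_square_eq0; [exact: arc_cont | exact: arc_cont |].
by move=> s t; apply: arcs_apart.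
Qed.

Definition arc_qwind N u v w : int := qwind (fun n => arc u v (gridpt N n) - p w) N.

Lemma arc_qwind_mod4 N u v w : (0 < N)%N -> u \in V -> v \in V -> adj u v ->
  exists m : int,
    arc_qwind N u v w = (quadrant (p v - p w))%:Z - (quadrant (p u - p w))%:Z + 4 * m.
Proof.
move=> N0 uV vV uv; have [m wind] := qwind_mod4 (fun n => arc u v (gridpt N n) - p w) N.
by exists m; rewrite /arc_qwind wind /= gridpt0 gridptN // arc0 // arc1.
Qed.

Lemma qwind_square_arcs N u v u' v' : (0 < N)%N ->
  u \in V -> v \in V -> u' \in V -> v' \in V -> adj u v -> adj u' v' ->
  [&& u != u', u != v', v != u' & v != v'] ->
  qwind_square (arc u v) (arc u' v') N =
    arc_qwind N u v u' + arc_qwind N u' v' v - arc_qwind N u v v' - arc_qwind N u' v' u.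
Proof.
move=> N0 uV vV u'V v'V uv u'v' /and4P[uu' uv' vu' vv'].
rewrite qwind_squareE // ?arc0 ?arc1 // => t t01.
by split; apply: arc_avoids_vertex; rewrite // eq_sym.
Qed.

Lemma quadrant_vertexC u w : u \in V -> w \in V -> u != w ->
  quadrant (p w - p u) = ((quadrant (p u - p w)%R + 2) %% 4)%N.
Proof. by move=> uV wV uw; rewrite -quadrantN ?opprB // subr_eq0 p_neq. Qed.

Lemma no_K33_drawing (a b : nat -> T) :
  (forall i, (i < 3)%N -> a i \in V) -> (forall j, (j < 3)%N -> b j \in V) ->
  (forall i k, (i < 3)%N -> (k < 3)%N -> i != k -> a i != a k) ->
  (forall j l, (j < 3)%N -> (l < 3)%N -> j != l -> b j != b l) ->
  (forall i j, (i < 3)%N -> (j < 3)%N -> a i != b j) ->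
  (forall i j, (i < 3)%N -> (j < 3)%N -> adj (a i) (b j)) ->
  False.
Proof.
move=> aV bV a_inj b_inj ab adj_ab.
have disj i j k l : (i < 3)%N -> (j < 3)%N -> (k < 3)%N -> (l < 3)%N ->
    i != k -> j != l -> [&& a i != a k, a i != b l, b j != a k & b j != b l].
  by move=> i3 j3 k3 l3 ik jl; rewrite a_inj ?b_inj ?ab // eq_sym ab.
have [N [N0 wind0]] : exists N, (0 < N)%N /\ forall i j k l,
    (i < 3)%N -> (j < 3)%N -> (k < 3)%N -> (l < 3)%N -> i != k -> j != l ->
    qwind_square (arc (a i) (b j)) (arc (a k) (b l)) N = 0.
  pose Q N (x : 'I_3 * 'I_3 * 'I_3 * 'I_3) := let: (i, j, k, l) := x in
    (i != k :> nat) -> (j != l :> nat) ->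
    qwind_square (arc (a i) (b j)) (arc (a k) (b l)) N = 0.
  have ev x : \forall N \near \oo, Q N x.
    case: x => [[[i j] k] l]; rewrite /Q.
    have [ik|ik] := eqVneq (i : nat) k; first by near=> N.
    have [jl|jl] := eqVneq (j : nat) l; first by near=> N.
    move: (ltn_ord i) (ltn_ord j) (ltn_ord k) (ltn_ord l) => i3 j3 k3 l3.
    near=> N => _ _; near: N.
    by apply: arcs_qwind_square_eq0; rewrite ?aV ?bV ?adj_ab ?disj.
  have : \forall N \near \oo, (0 < N)%N /\ forall x, Q N x.
    by near=> N; split; near: N; [exact: nbhs_infty_gt | exact: filter_forall ev].
  case/filter_ex => N [N0 wind]; exists N; split => // i j k l i3 j3 k3 l3.
  by have := wind (inord i, inord j, inord k, inord l); rewrite /Q /= !inordK.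
apply: (@no_K33_quarter_windings
  (fun i j k => arc_qwind N (a i) (b j) (a k)) (fun i j l => arc_qwind N (a i) (b j) (b l))
  (fun i k => quadrant (p (a i) - p (a k))) (fun j l => quadrant (p (b j) - p (b l)))
  (fun i l => quadrant (p (a i) - p (b l))) (fun j k => quadrant (p (b j) - p (a k)))).
- move=> i j k l i3 j3 k3 l3 ik jl.
  by rewrite -(wind0 i j k l) // qwind_square_arcs ?aV ?bV ?adj_ab ?disj.
- by move=> i j k i3 j3 k3 _; apply: arc_qwind_mod4; rewrite ?aV ?bV ?adj_ab.
- by move=> i j l i3 j3 l3 _; apply: arc_qwind_mod4; rewrite ?aV ?bV ?adj_ab.
- by move=> i k i3 k3 ik; rewrite quadrant_vertexC ?aV ?a_inj.
- by move=> j l j3 l3 jl; rewrite quadrant_vertexC ?bV ?b_inj.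
- by move=> i j i3 j3; rewrite quadrant_vertexC ?aV ?bV ?ab.
Unshelve. all: end_near.
Qed.

End Drawing.

Lemma K33_not_planar (R : realType) (T : finType) (V : {set T}) (adj : rel T)
    (a b : nat -> T) :
  (forall i, (i < 3)%N -> a i \in V) -> (forall j, (j < 3)%N -> b j \in V) ->
  (forall i k, (i < 3)%N -> (k < 3)%N -> i != k -> a i != a k) ->
  (forall j l, (j < 3)%N -> (l < 3)%N -> j != l -> b j != b l) ->
  (forall i j, (i < 3)%N -> (j < 3)%N -> a i != b j) ->
  (forall i j, (i < 3)%N -> (j < 3)%N -> adj (a i) (b j)) ->
  ~ planar R V adj.
Proof.
move=> aV bV a_inj b_inj ab adj_ab [p [arc [p_inj [ends [avoid cross]]]]].
apply: (no_K33_drawing p_inj _ _ _ avoid cross aV bV a_inj b_inj ab adj_ab).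
- by move=> u v uV vV uv; case: (ends u v uV vV uv).
- by move=> u v uV vV uv; case: (ends u v uV vV uv) => _ [_ []].
- by move=> u v uV vV uv; case: (ends u v uV vV uv) => _ [_ []].
Qed.

Lemma card_ge3_triple (T : finType) (X : {set T}) : (3 <= #|X|)%N ->
  exists f : nat -> T, (forall i, (i < 3)%N -> f i \in X) /\
    (forall i k, (i < 3)%N -> (k < 3)%N -> i != k -> f i != f k).
Proof.
case: (enum X) (enum_uniq X) (mem_enum X) (cardE X) => [|x0 s] Xu Xs -> //= s2.
exists (nth x0 (x0 :: s)); split=> [i i3 | i k i3 k3 ik].
  by rewrite -Xs mem_nth //= (leq_trans i3).
by rewrite nth_uniq //= (leq_trans i3, leq_trans k3).
Qed.

Section IdealGraph.
Variables (A : finComUnitRingType) (I : {set A}).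
Hypothesis I_ideal : is_ideal I.

Lemma idealD a b : a \in I -> b \in I -> a + b \in I.
Proof. by case: I_ideal => _ [+ _]; apply. Qed.

Lemma idealMl r a : a \in I -> r * a \in I.
Proof. by case: I_ideal => _ [_ +]; apply. Qed.

Lemma ideal0 : 0 \in I.
Proof. by case: I_ideal. Qed.

Lemma idealN a : a \in I -> - a \in I.
Proof. by move=> aI; rewrite -mulN1r idealMl. Qed.

Lemma princ_plusP a z :
  reflect (exists r, exists2 i, i \in I & z = a * r + i) (z \in princ_plus I a).
Proof.
rewrite inE; apply: (iffP existsP) => [[r /existsP[i /andP[iI /eqP ->]]] | [r [i iI ->]]].
  by exists r, i.
by exists r; apply/existsP; exists i; rewrite iI eqxx.
Qed.

Lemma ideal_sub_princ_plus a : I \subset princ_plus I a.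
Proof.
by apply/fintype.subsetP => i iI; apply/princ_plusP; exists 0, i; rewrite ?mulr0 ?add0r.
Qed.

Lemma princ_plus_sub (J : {set A}) a : is_ideal J -> I \subset J -> a \in J ->
  princ_plus I a \subset J.
Proof.
move=> [_ [JD JM]] IJ aJ; apply/fintype.subsetP => _ /princ_plusP[r [i iI ->]].
by apply: JD; [rewrite mulrC; apply: JM | apply: (fintype.subsetP IJ)].
Qed.

Lemma princ_plus_units u v x y : u \is a GRing.unit ->
  u * x \in princ_plus I (v * y) -> x \in princ_plus I y.
Proof.
move=> uU /princ_plusP[r [i iI E]]; apply/princ_plusP.
exists (v * r / u), (u^-1 * i); first exact: idealMl.
by rewrite -[x](mulKr uU) E; ring.
Qed.

Lemma gen_plus_setD1 (S : {set A}) x : x \in S ->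
  gen_plus I (S :\ x) \subset gen_plus I S.
Proof.
move=> xS; apply/fintype.subsetP => z; rewrite !inE => /existsP[c zc].
apply/existsP; exists [ffun s => if s == x then 0 else c s].
rewrite (big_setD1 x xS) /= ffunE eqxx mul0r add0r.
rewrite (eq_bigr (fun s => c s * s)) // => s.
by rewrite !inE ffunE => /andP[/negbTE -> _].
Qed.

(* If x were in yA + I, the generator x could be dropped from S. *)
Lemma min_gen_notin_princ_plus (m S : {set A}) x y : min_gen_set_mod I m S ->
  x \in S -> y \in S -> x - y \notin I -> x \notin princ_plus I y.
Proof.
move=> [_ [_ [Sm Smin]]] xS yS xy; apply/negP => /princ_plusP[r [i iI xE]].
have yx : y != x by apply: contra xy => /eqP ->; rewrite subrr ideal0.
have yS' : y \in S :\ x by rewrite !inE yx yS.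
have /negP := Smin (S :\ x) (properD1 xS); apply.
rewrite finset.eqEsubset -{1}Sm gen_plus_setD1 //= -Sm.
apply/fintype.subsetP => z; rewrite !inE => /existsP[c zc].
apply/existsP; exists [ffun s => if s == y then c y + c x * r else c s].
rewrite (big_setD1 y yS') /= ffunE eqxx.
rewrite (eq_bigr (fun s => c s * s)); last first.
  by move=> s; rewrite !inE ffunE => /andP[/negbTE -> _].
move: zc; rewrite (big_setD1 x xS) (big_setD1 y yS') /= => zc.
have := idealD zc (idealMl (c x) iI).
by rewrite xE; congr (_ \in I); ring.
Qed.

Lemma unit_orbitP (x z : A) :
  reflect (exists2 u, u \is a GRing.unit & z = u * x) (z \in unit_orbit x).
Proof.
rewrite /unit_orbit; apply: (iffP imsetP) => [[u] | [u uU ->]].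
  by rewrite inE => uU ->; exists u.
by exists u; rewrite ?inE.
Qed.

Lemma unit_orbits_gadj x y z w :
  x \notin princ_plus I y -> y \notin princ_plus I x ->
  z \in unit_orbit x -> w \in unit_orbit y -> gadj I z w.
Proof.
move=> xy yx /unit_orbitP[u uU ->] /unit_orbitP[v vU ->].
have zw : u * x \notin princ_plus I (v * y) by apply: contra xy; apply: princ_plus_units.
have wz : v * y \notin princ_plus I (u * x) by apply: contra yx; apply: princ_plus_units.
rewrite /gadj zw wz !andbT; apply/eqP => zwE; move/negP: zw; apply; rewrite zwE.
by apply/princ_plusP; exists 1, 0; rewrite ?ideal0 ?mulr1 ?addr0.
Qed.

Lemma gvert_of_notin_princ_plus (m : {set A}) z w : is_ideal m -> 1 \notin m ->
  I \subset m -> z \in m -> z \notin princ_plus I w -> z \in gvert I.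
Proof.
move=> m_ideal m1 Im zm zw; rewrite inE (contra _ zw) /=; last first.
  exact: (fintype.subsetP (ideal_sub_princ_plus w)).
apply: contraNneq m1 => zT; apply: (fintype.subsetP (princ_plus_sub m_ideal Im zm)).
by rewrite zT inE.
Qed.

Lemma unit_orbit_sub (J : {set A}) (x : A) :
  is_ideal J -> x \in J -> unit_orbit x \subset J.
Proof.
by move=> [_ [_ JM]] xJ; apply/fintype.subsetP => _ /unit_orbitP[u _ ->]; apply: JM.
Qed.

End IdealGraph.

Unset Implicit Arguments.

Theorem proposition3p13 (A : finComUnitRingType) (m I : {set A}) (x y : A)
    (R : realType) :
  local_max_ideal m -> is_ideal I -> I \subset m -> ~ principal_mod I m ->
  (exists S : {set A}, min_gen_set_mod I m S /\ x \in S /\ y \in S /\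
     x - y \notin I) ->
  (3 <= #|unit_orbit x|)%N -> (3 <= #|unit_orbit y|)%N ->
  ~ planar R (gvert I) (gadj I).
Proof.
move=> [[m_ideal [m1 _]] _] I_ideal Im _ [S [Smin [xS [yS xy]]]] x3 y3.
have yx : y - x \notin I.
  by rewrite -opprB; apply: contra xy => /(idealN I_ideal); rewrite opprK.
have xny := min_gen_notin_princ_plus I_ideal Smin xS yS xy.
have ynx := min_gen_notin_princ_plus I_ideal Smin yS xS yx.
have [Sm _] := Smin.
have [a [aU a_inj]] := card_ge3_triple x3.
have [b [bU b_inj]] := card_ge3_triple y3.
have adj_ab i j : (i < 3)%N -> (j < 3)%N -> gadj I (a i) (b j).
  by move=> i3 j3; apply: unit_orbits_gadj (aU i i3) (bU j j3).
have in_m z u : z \in S -> u \in unit_orbit z -> u \in m.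
  move=> zS; apply/fintype.subsetP/unit_orbit_sub => //.
  exact: (fintype.subsetP Sm).
apply: (K33_not_planar (a := a) (b := b) _ _ a_inj b_inj _ adj_ab).
- move=> i i3; case/and3P: (adj_ab i 0%N i3 isT) => _ ab _.
  exact: gvert_of_notin_princ_plus m_ideal m1 Im (in_m x _ xS (aU i i3)) ab.
- move=> j j3; case/and3P: (adj_ab 0%N j isT j3) => _ _ ba.
  exact: gvert_of_notin_princ_plus m_ideal m1 Im (in_m y _ yS (bU j j3)) ba.
- by move=> i j i3 j3; case/and3P: (adj_ab i j i3 j3).
Qed.
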